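(* For all $\eta,\varepsilon>0$ and $c,p\in\mathbb N$ there exist $\eta'>0$ and $n_0$ such that the following holds for all $n\ge n_0$. Let $H$ be a $3$-graph of order $n$ and let $X,Y\subseteq V(H)$ be disjoint sets that are both $(c,\eta)$-closed in $H$. Suppose there are at least $\varepsilon n^{4p+1}$ $(X,Y)$-bridges of length $p$. Then $X\cup Y$ is $(2c+p,\eta')$-closed in $H$.
   Context: $K_4^-$ is the $3$-graph with $4$ vertices and $3$ edges; a $K_4^-$-factor is a set of vertex-disjoint (not necessarily induced) copies of $K_4^-$ covering all vertices. Let $H$ be a $3$-graph of order $n$. For $c\in\mathbb N$ and vertices $x,y$, a set $S\subseteq V(H)$ is an $(x,y)$-connector of length $c$ if $S\cap\{x,y\}=\emptyset$, $|S|=4c-1$, and both $H[S\cup\{x\}]$ and $H[S\cup\{y\}]$ contain $K_4^-$-factors. Vertices $x,y$ are $(c,\eta)$-close if there are at least $\eta n^{4c-1}$ $(x,y)$-connectors of length $c$ in $H$. A set $U\subseteq V(H)$ is $(c,\eta)$-closed in $H$ if every two vertices of $U$ are $(c,\eta)$-close (connectors may use vertices outside $U$). For $X,Y\subseteq V(H)$, a triple $(x,y,S)$ is an $(X,Y)$-bridge of length $c$ if $x\in X$, $y\in Y$ and $S$ is an $(x,y)$-connector of length $c$. *)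

From mathcomp Require Import all_boot all_order all_algebra.
Set Implicit Arguments. Unset Strict Implicit. Unset Printing Implicit Defensive.
Import Order.TTheory GRing.Theory Num.Theory.

Definition is_3graph (n : nat) (E : {set {set 'I_n}}) : bool :=
  [forall e in E, #|e| == 3].

(* Q spans a (not necessarily induced) copy of K_4^- : |Q| = 4 and at least
   3 edges of H lie inside Q (a 4-set has exactly 4 triples; K_4^- has 3). *)
Definition K4m_on (n : nat) (E : {set {set 'I_n}}) (Q : {set 'I_n}) : bool :=
  (#|Q| == 4) && (3 <= #|[set e in E | e \subset Q]|).

Definition has_K4m_factor (n : nat) (E : {set {set 'I_n}}) (W : {set 'I_n}) : bool :=
  [exists P : {set {set 'I_n}}, partition P W && [forall Q in P, K4m_on E Q]].

Definition connector (n : nat) (E : {set {set 'I_n}}) (c : nat)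
    (x y : 'I_n) (S : {set 'I_n}) : bool :=
  [&& x \notin S, y \notin S, #|S| == (4 * c - 1)%N,
      has_K4m_factor E (x |: S) & has_K4m_factor E (y |: S)].

Definition close (n : nat) (E : {set {set 'I_n}}) (c : nat) (eta : rat)
    (x y : 'I_n) : Prop :=
  (eta * (n%:R ^+ (4 * c - 1)) <= (#|[set S | connector E c x y S]|)%:R)%R.

Definition closed_set (n : nat) (E : {set {set 'I_n}}) (c : nat) (eta : rat)
    (U : {set 'I_n}) : Prop :=
  forall x y, x \in U -> y \in U -> close E c eta x y.

Definition num_bridges (n : nat) (E : {set {set 'I_n}}) (c : nat)
    (X Y : {set 'I_n}) : nat :=
  #|[set t : 'I_n * 'I_n * {set 'I_n} |
      [&& t.1.1 \in X, t.1.2 \in Y & connector E c t.1.1 t.1.2 t.2]]|.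

From mathcomp Require Import all_boot all_order all_algebra.
From mathcomp Require Import zify ring lra.
Import Order.TTheory GRing.Theory Num.Theory.

Set Implicit Arguments. Unset Strict Implicit. Unset Printing Implicit Defensive.

(* Let u, v be in X :|: Y.  Take a bridge (x', y', S) with x' in X, y' in Y, a
   connector S1 attaching u or v to the X end and a connector S2 attaching u or
   v to the Y end (a (u, x'), (u, v) or (x', x') connector, and symmetrically),
   all pairwise disjoint and avoiding u, v.  Then
   T = S1 :|: (x' |: S) :|: (y' |: S2) is a (u, v)-connector of length 2c + p,
   because u |: T and v |: T both split into three blocks with K_4^- factors.
   Closedness of X and Y and the eps n^(4p+1) bridges give
   eps (eta/2)^2 n^(4(2c+p)-1) / 2 such tuples, since the tuples that collide
   form an O(1/n) fraction, and each T arises from at most |T|^2 8^|T| tuples. *)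


Lemma card_bigcup_le (I T : finType) (P : {pred I}) (U : I -> {set T}) :
  #|\bigcup_(i | P i) U i| <= \sum_(i | P i) #|U i|.
Proof.
elim/big_rec2: _ => [|i A k _ le_Ak]; first by rewrite cards0.
by apply: leq_trans (leq_card_setU _ _).1 _; rewrite leq_add2l.
Qed.

Lemma card_dep_pairs (T1 T2 : finType) (A : {set T1}) (B : T1 -> {set T2}) :
  #|[set w : T1 * T2 | (w.1 \in A) && (w.2 \in B w.1)]| = \sum_(i in A) #|B i|.
Proof.
under [RHS]eq_bigr do rewrite -sum1_card.
by rewrite pair_big_dep /= sum1dep_card.
Qed.

Lemma card_le_mul_fibers (T1 T2 : finType) (G : {set T1}) (f : T1 -> T2)
    (C : {set T2}) (K : nat) :
  {in G, forall w, f w \in C} ->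
  (forall y, y \in C -> #|[set w in G | f w == y]| <= K) ->
  #|G| <= K * #|C|.
Proof.
move=> fGC fiber_le; rewrite -sum1_card (partition_big_imset f) /=.
apply: (@leq_trans (\sum_(y in f @: G) K)).
  by apply: leq_sum => y /imsetP [w wG ->]; rewrite sum1dep_card fiber_le ?fGC.
rewrite sum_nat_const mulnC leq_mul2l subset_leq_card ?orbT //.
by apply/subsetP => y /imsetP [w wG ->]; apply: fGC.
Qed.

Section SetCounting.
Variable T : finType.
Implicit Types (A B C F : {set T}) (x y : T).

Lemma disjointsUl A B C : [disjoint A :|: B & C] = [disjoint A & C] && [disjoint B & C].
Proof. by rewrite -!setI_eq0 setIUl setU_eq0. Qed.

Lemma disjointsUr A B C : [disjoint A & B :|: C] = [disjoint A & B] && [disjoint A & C].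
Proof. by rewrite -!setI_eq0 setIUr setU_eq0. Qed.

Lemma disjointsU1 x y A B :
  [disjoint x |: A & y |: B] = [&& x != y, x \notin B, y \notin A & [disjoint A & B]].
Proof.
rewrite disjointsUl !disjointsUr disjoints1 (disjoint_sym A) disjoints1.
by rewrite !inE -andbA disjoints1.
Qed.

Lemma cardsU_disjoint A B : [disjoint A & B] -> #|A :|: B| = #|A| + #|B|.
Proof. by move=> dAB; rewrite cardsU (disjoint_setI0 dAB) cards0 subn0. Qed.

Lemma cardsU1_le x A : #|x |: A| <= #|A|.+1.
Proof. by rewrite cardsU1; case: (x \notin A). Qed.

Lemma ffact_le_exp m k : m ^_ k <= m ^ k.
Proof.
elim: k => // k IHk; rewrite ffactnSr expnS mulnC.
by apply: leq_mul => //; rewrite leq_subr.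
Qed.

Lemma card_ksubsets_le k : #|[set S : {set T} | #|S| == k]| <= #|T| ^ k.
Proof.
rewrite card_draws; apply: leq_trans (ffact_le_exp _ _).
by rewrite -bin_ffact leq_pmulr ?fact_gt0.
Qed.

Lemma card_ksubsets_mem_le x k :
  #|[set S : {set T} | (#|S| == k) && (x \in S)]| <= #|T| ^ k.-1.
Proof.
apply: leq_trans (card_ksubsets_le k.-1).
rewrite -(card_in_imset (f := fun S => S :\ x)).
  apply/subset_leq_card/subsetP => R /imsetP [S]; rewrite !inE => /andP [/eqP <- xS] ->.
  by rewrite [in X in _ == X](cardsD1 x) xS.
move=> S1 S2; rewrite !inE => /andP [_ xS1] /andP [_ xS2] eqS.
by rewrite -(setD1K xS1) -(setD1K xS2) eqS.
Qed.

Lemma card_ksubsets_meeting_le F k :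
  #|[set S : {set T} | (#|S| == k) && ~~ [disjoint S & F]]| <= #|F| * #|T| ^ k.-1.
Proof.
have -> : [set S : {set T} | (#|S| == k) && ~~ [disjoint S & F]] =
    \bigcup_(x in F) [set S : {set T} | (#|S| == k) && (x \in S)].
  apply/setP => S; rewrite inE; apply/andP/bigcupP.
    by move=> [kS /pred0Pn [x /andP [xS xF]]]; exists x; rewrite // inE kS.
  by move=> [x xF]; rewrite inE => /andP [kS xS]; split; last by apply/pred0Pn; exists x; apply/andP.
apply: leq_trans (card_bigcup_le _ _) _.
by rewrite -sum_nat_const; apply: leq_sum => x _; apply: card_ksubsets_mem_le.
Qed.

End SetCounting.

Definition bridge_support (T : finType) (t : T * T * {set T}) : {set T} :=
  t.1.1 |: (t.1.2 |: t.2).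

Definition chain (T : finType) (t : T * T * {set T}) (S1 S2 : {set T}) : {set T} :=
  S1 :|: ((t.1.1 |: t.2) :|: (t.1.2 |: S2)).

Definition chain_multiplicity (m : nat) : nat := m ^ 2 * 8 ^ m.

Lemma leq_chain_multiplicity m1 m2 :
  m1 <= m2 -> chain_multiplicity m1 <= chain_multiplicity m2.
Proof. by move=> le_m; rewrite leq_mul ?leq_sqr ?leq_pexp2l. Qed.

Lemma card_triples_meeting_le (T : finType) (F : {set T}) b : 0 < b ->
  #|[set t : T * T * {set T} | (#|t.2| == b) && ~~ [disjoint F & bridge_support t]]|
    <= 3 * #|F| * #|T| ^ b.+1.
Proof.
move=> b_gt0; set Sb := [set S : {set T} | #|S| == b].
set Mb := [set S : {set T} | (#|S| == b) && ~~ [disjoint S & F]].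
apply: (@leq_trans #|setX (setX F setT) Sb :|: setX (setX setT F) Sb
                     :|: setX (setX setT setT) Mb|).
  apply/subset_leq_card/subsetP => -[[x y] S].
  rewrite inE /bridge_support /= => /andP [bS].
  rewrite disjoint_sym !disjointsUl !disjoints1 !negb_and !negbK.
  by rewrite !inE /= bS (disjoint_sym S) !andbT orbA.
apply: leq_trans (leq_card_setU _ _).1 _.
apply: leq_trans (leq_add (leq_card_setU _ _).1 (leqnn _)) _.
rewrite !cardsX !cardsT.
have le_Sb := card_ksubsets_le T b; have le_Mb := card_ksubsets_meeting_le F b.
have expSb : #|T| ^ b = #|T| * #|T| ^ b.-1 by rewrite -expnS prednK.
rewrite -/Sb -/Mb expSb in le_Sb *; rewrite expnS expSb.
have le1 : #|F| * #|T| * #|Sb| <= #|F| * #|T| * (#|T| * #|T| ^ b.-1) by rewrite leq_mul.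
have le2 : #|T| * #|T| * #|Mb| <= #|T| * #|T| * (#|F| * #|T| ^ b.-1) by rewrite leq_mul.
nia.
Qed.

Lemma card_chain_fiber_le (T : finType) (C : {set T}) :
  #|[set w : T * T * {set T} * {set T} * {set T} | chain w.1.1 w.1.2 w.2 == C]|
    <= chain_multiplicity #|C|.
Proof.
apply: (@leq_trans #|setX (setX (setX (setX C C) (powerset C)) (powerset C)) (powerset C)|).
  apply/subset_leq_card/subsetP => -[[[[x y] S] S1] S2]; rewrite inE /chain /= => /eqP <-.
  rewrite !in_setX /= !powersetE !inE !eqxx !orbT /= -!andbA.
  by apply/and3P; split; apply/subsetP => v; rewrite !inE => ->; rewrite ?orbT.
rewrite !cardsX !card_powerset /chain_multiplicity.
by rewrite (_ : 8 = 2 * 2 * 2) // !expnMn -mulnn !mulnA.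
Qed.

Local Open Scope ring_scope.

Lemma card_dep_pairs_ge (R : numDomainType) (T1 T2 : finType) (A : {set T1})
    (B : T1 -> {set T2}) (L : R) :
  (forall i, i \in A -> L <= #|B i|%:R) ->
  #|A|%:R * L <= #|[set w : T1 * T2 | (w.1 \in A) && (w.2 \in B w.1)]|%:R.
Proof.
move=> L_le; rewrite card_dep_pairs natr_sum mulr_natl -sumr_const.
exact: ler_sum.
Qed.

Lemma card_ksubsets_avoiding_ge (T : finType) (Q : pred {set T}) (F : {set T})
    (a f : nat) (eta : rat) :
  (0 < a)%N -> (forall S, Q S -> #|S| = a) -> (#|F| <= f)%N ->
  (2 * f)%:R <= eta * #|T|%:R ->
  eta * #|T|%:R ^+ a <= #|[set S | Q S]|%:R ->
  eta / 2 * #|T|%:R ^+ a <= #|[set S | Q S && [disjoint S & F]]|%:R.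
Proof.
move=> a_gt0 Q_size F_le f_small Q_many.
have split_Q : (#|[set S | Q S]| <=
    #|[set S | Q S && [disjoint S & F]]| + f * #|T| ^ a.-1)%N.
  apply: (@leq_trans #|[set S | Q S && [disjoint S & F]]
                     :|: [set S : {set T} | (#|S| == a) && ~~ [disjoint S & F]]|).
    apply/subset_leq_card/subsetP => S; rewrite !inE => QS.
    by rewrite QS Q_size // eqxx /=; case: [disjoint S & F].
  apply: leq_trans (leq_card_setU _ _).1 _; rewrite leq_add2l.
  by apply: leq_trans (card_ksubsets_meeting_le F a) _; rewrite leq_mul2r F_le orbT.
have meeting_small : f%:R * #|T|%:R ^+ a.-1 <= eta / 2 * #|T|%:R ^+ a.
  rewrite -(prednK a_gt0) exprS /= mulrA ler_wpM2r ?exprn_ge0 //.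
  by move: f_small; rewrite natrM; lra.
have : #|[set S | Q S]|%:R <=
    #|[set S | Q S && [disjoint S & F]]|%:R + f%:R * #|T|%:R ^+ a.-1 :> rat.
  by rewrite -natrX -natrM -natrD ler_nat.
lra.
Qed.

Section ChainCounting.
Variable T : finType.
Local Notation N := (#|T|%:R : rat).
Variables (F : {set T}) (B : {set T * T * {set T}}) (P1 P2 : T -> {set T} -> bool).
Variables (a b : nat) (eps eta : rat).
Hypotheses (a_gt0 : (0 < a)%N) (b_gt0 : (0 < b)%N) (eps_gt0 : 0 < eps) (eta_gt0 : 0 < eta).
Hypothesis eps_large : (6 * #|F|)%:R <= eps * N.
Hypothesis eta_large : (2 * (#|F| + a + b + 2))%:R <= eta * N.
Hypothesis B_size : forall t, t \in B -> #|t.2| = b.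
Hypothesis P1_size : forall x S, P1 x S -> #|S| = a.
Hypothesis P2_size : forall y S, P2 y S -> #|S| = a.
Hypothesis P1_many : forall t, t \in B -> eta * N ^+ a <= #|[set S | P1 t.1.1 S]|%:R.
Hypothesis P2_many : forall t, t \in B -> eta * N ^+ a <= #|[set S | P2 t.1.2 S]|%:R.
Hypothesis B_many : eps * N ^+ (b + 2) <= #|B|%:R.

Definition avoiding_bridges := [set t in B | [disjoint F & bridge_support t]].

Definition first_links (t : T * T * {set T}) :=
  [set S1 | P1 t.1.1 S1 && [disjoint S1 & F :|: bridge_support t]].

Definition second_links (t : T * T * {set T}) (S1 : {set T}) :=
  [set S2 | P2 t.1.2 S2 && [disjoint S2 & (F :|: bridge_support t) :|: S1]].

Definition chain_starts :=
  [set w : T * T * {set T} * {set T} | (w.1 \in avoiding_bridges) && (w.2 \in first_links w.1)].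

Definition chain_tuples :=
  [set w : T * T * {set T} * {set T} * {set T} |
    (w.1 \in chain_starts) && (w.2 \in second_links w.1.1 w.1.2)].

Definition chain_sets := [set chain w.1.1 w.1.2 w.2 | w in chain_tuples].

Lemma card_bridge_support_le t : t \in B -> (#|bridge_support t| <= b + 2)%N.
Proof.
move=> tB; rewrite -(B_size tB) addn2; apply: leq_trans (cardsU1_le _ _) _.
by rewrite ltnS cardsU1_le.
Qed.

Lemma card_avoiding_bridges_ge : eps / 2 * N ^+ (b + 2) <= #|avoiding_bridges|%:R.
Proof.
have split_B : (#|B| <= #|avoiding_bridges| + 3 * #|F| * #|T| ^ b.+1)%N.
  apply: (@leq_trans #|avoiding_bridges :|:
      [set t : T * T * {set T} | (#|t.2| == b) && ~~ [disjoint F & bridge_support t]]|).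
    apply/subset_leq_card/subsetP => t tB; rewrite !inE tB B_size // eqxx /=.
    by case: [disjoint _ & _].
  by apply: leq_trans (leq_card_setU _ _).1 _; rewrite leq_add2l card_triples_meeting_le.
have meeting_small : (3 * #|F|)%:R * N ^+ b.+1 <= eps / 2 * N ^+ (b + 2).
  rewrite addn2 [in X in _ <= X]exprS mulrA ler_wpM2r ?exprn_ge0 //.
  by move: eps_large; rewrite !natrM; lra.
have : #|B|%:R <= #|avoiding_bridges|%:R + (3 * #|F|)%:R * N ^+ b.+1.
  by rewrite -natrX -natrM -natrD ler_nat.
move: meeting_small B_many.
set X := _ ^+ (b + 2); set Y := _ * _ ^+ b.+1.
lra.
Qed.

Lemma card_first_links_ge t :
  t \in avoiding_bridges -> eta / 2 * N ^+ a <= #|first_links t|%:R.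
Proof.
rewrite inE => /andP [tB _].
apply: (card_ksubsets_avoiding_ge (f := (#|F| + a + b + 2)%N)) => //; last exact: P1_many.
  exact: P1_size.
apply: leq_trans (leq_card_setU _ _).1 _; have := card_bridge_support_le tB; lia.
Qed.

Lemma card_second_links_ge t S1 : t \in avoiding_bridges -> S1 \in first_links t ->
  eta / 2 * N ^+ a <= #|second_links t S1|%:R.
Proof.
rewrite !inE => /andP [tB _] /andP [P1S1 _].
apply: (card_ksubsets_avoiding_ge (f := (#|F| + a + b + 2)%N)) => //; last exact: P2_many.
  exact: P2_size.
apply: leq_trans (leq_card_setU _ _).1 _; rewrite (P1_size P1S1).
apply: leq_trans (leq_add (leq_card_setU _ _).1 (leqnn a)) _.
have := card_bridge_support_le tB; lia.
Qed.

Lemma card_chain_tuples_ge :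
  eps / 2 * (eta / 2) ^+ 2 * N ^+ (2 * a + b + 2) <= #|chain_tuples|%:R.
Proof.
have L_ge0 : 0 <= eta / 2 * N ^+ a by rewrite mulr_ge0 ?exprn_ge0 ?divr_ge0 ?ler0n ?ltW.
have starts_ge : #|avoiding_bridges|%:R * (eta / 2 * N ^+ a) <= #|chain_starts|%:R.
  exact: card_dep_pairs_ge card_first_links_ge.
have tuples_ge : #|chain_starts|%:R * (eta / 2 * N ^+ a) <= #|chain_tuples|%:R.
  apply: (card_dep_pairs_ge (B := fun w => second_links w.1 w.2)) => w.
  rewrite inE => /andP [wB wS1].
  exact: card_second_links_ge.
apply: le_trans tuples_ge; apply: le_trans (ler_wpM2r L_ge0 starts_ge).
apply: le_trans (ler_wpM2r L_ge0 (ler_wpM2r L_ge0 card_avoiding_bridges_ge)).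
rewrite (_ : 2 * a + b + 2 = b + 2 + a + a)%N; last lia.
by rewrite !exprD le_eqVlt; apply/orP; left; apply/eqP; ring.
Qed.

Lemma card_chain_le w : w \in chain_tuples ->
  (#|chain w.1.1 w.1.2 w.2| <= 2 * a + b + 2)%N.
Proof.
move: w => [[t S1] S2]; rewrite !inE /= => /andP [/andP [/andP [tB _] /andP [P1S1 _]]].
move=> /andP [P2S2 _]; apply: leq_trans (leq_card_setU _ _).1 _.
apply: leq_trans (leq_add (leqnn _) (leq_card_setU _ _).1) _.
have := cardsU1_le t.1.1 t.2; have := cardsU1_le t.1.2 S2.
rewrite (P1_size P1S1) (P2_size P2S2) B_size // => le2 le1.
by apply: leq_trans (leq_add (leqnn a) (leq_add le1 le2)) _; lia.
Qed.

Lemma card_chain_sets_ge :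
  eps / 2 * (eta / 2) ^+ 2 * N ^+ (2 * a + b + 2) <=
    (chain_multiplicity (2 * a + b + 2))%:R * #|chain_sets|%:R.
Proof.
apply: le_trans card_chain_tuples_ge _; rewrite -natrM ler_nat.
apply: (card_le_mul_fibers (f := fun w => chain w.1.1 w.1.2 w.2)) => [w wG|C].
  exact: imset_f.
case/imsetP => w wG ->; apply: leq_trans (leq_chain_multiplicity (card_chain_le wG)).
apply: leq_trans (card_chain_fiber_le _).
by apply/subset_leq_card/subsetP => w'; rewrite !inE => /andP [_ ->].
Qed.

End ChainCounting.

Section K4mFactors.
Variables (n : nat) (E : {set {set 'I_n}}).
Implicit Types (W : {set 'I_n}) (x y z : 'I_n).

Lemma K4m_factorU W1 W2 : [disjoint W1 & W2] ->
  has_K4m_factor E W1 -> has_K4m_factor E W2 -> has_K4m_factor E (W1 :|: W2).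
Proof.
move=> dW /existsP [P1 /andP [partP1 K4P1]] /existsP [P2 /andP [partP2 K4P2]].
apply/existsP; exists (P1 :|: P2); apply/andP; split.
  move: partP1 partP2 => /and3P [/eqP covP1 tP1 P1n0] /and3P [/eqP covP2 tP2 P2n0].
  apply/and3P; split.
  - by rewrite /cover bigcup_setU -/(cover P1) -/(cover P2) covP1 covP2.
  - by apply: trivIsetU; rewrite ?covP1 ?covP2.
  - by rewrite inE negb_or P1n0 P2n0.
apply/forall_inP => Q; rewrite inE => /orP [] QP.
  exact: (forall_inP K4P1).
exact: (forall_inP K4P2).
Qed.

Lemma K4m_factor_card_ge x W : x \in W -> has_K4m_factor E W -> (4 <= #|W|)%N.
Proof.
move=> xW /existsP [P /andP [partP K4P]].
have /bigcupP [Q QP _] : x \in cover P by rewrite (cover_partition partP).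
have /andP [/eqP <- _] := forall_inP K4P Q QP.
exact: subset_leq_card (partitionS partP QP).
Qed.

Lemma connector_sym k x y S : connector E k x y S = connector E k y x S.
Proof. by apply/and5P/and5P => -[? ? ? ? ?]. Qed.

Lemma card_connector k x y S : connector E k x y S -> #|S| = (4 * k - 1)%N.
Proof. by case/and5P => _ _ /eqP. Qed.

Lemma connector_length_gt0 k x y S : connector E k x y S -> (0 < k)%N.
Proof.
case/and5P => xS _ /eqP cardS Fx _; have := K4m_factor_card_ge (setU11 x S) Fx.
by rewrite cardsU1 xS cardS; case: k {cardS}.
Qed.

Lemma close_sym k eta x y : close E k eta x y -> close E k eta y x.
Proof. by rewrite /close (eq_finset _ (connector_sym k x y)). Qed.

(* [z |: chain] splits into three K_4^- factorable blocks either as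
   [(z |: S1) :|: (x' |: S) :|: (y' |: S2)] or as
   [(x' |: S1) :|: (y' |: S) :|: (z |: S2)]. *)
Definition bridge_link z x' y' (S1 S2 : {set 'I_n}) : bool :=
  has_K4m_factor E (z |: S1) && has_K4m_factor E (y' |: S2)
  || has_K4m_factor E (x' |: S1) && has_K4m_factor E (z |: S2).

Section ChainFactor.
Variables (F : {set 'I_n}) (z x' y' : 'I_n) (S S1 S2 : {set 'I_n}).
Hypotheses (zF : z \in F) (x'S : x' \notin S) (y'S : y' \notin S) (x'y' : x' != y').
Hypothesis S_fresh : [disjoint F & bridge_support (x', y', S)].
Hypothesis S1_fresh : [disjoint S1 & F :|: bridge_support (x', y', S)].
Hypothesis S2_fresh : [disjoint S2 & (F :|: bridge_support (x', y', S)) :|: S1].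

Let z_out : z \notin x' |: (y' |: S).
Proof. by rewrite (disjointFr S_fresh zF). Qed.

Let z_x' : z != x'. Proof. by move: z_out; rewrite !inE !negb_or => /and3P []. Qed.
Let z_y' : z != y'. Proof. by move: z_out; rewrite !inE !negb_or => /and3P []. Qed.
Let z_S : z \notin S. Proof. by move: z_out; rewrite !inE !negb_or => /and3P []. Qed.
Let z_S1 : z \notin S1. Proof. by rewrite (disjointFl S1_fresh) // !inE zF. Qed.
Let x'_S1 : x' \notin S1. Proof. by rewrite (disjointFl S1_fresh) // !inE eqxx !orbT. Qed.
Let y'_S1 : y' \notin S1. Proof. by rewrite (disjointFl S1_fresh) // !inE eqxx !orbT. Qed.
Let z_S2 : z \notin S2. Proof. by rewrite (disjointFl S2_fresh) // !inE zF. Qed.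
Let x'_S2 : x' \notin S2. Proof. by rewrite (disjointFl S2_fresh) // !inE eqxx !orbT. Qed.
Let y'_S2 : y' \notin S2. Proof. by rewrite (disjointFl S2_fresh) // !inE eqxx !orbT. Qed.
Let S1_S : [disjoint S1 & S].
Proof. by apply: disjointWr S1_fresh; apply/subsetP => w wS; rewrite !inE wS !orbT. Qed.
Let S2_S : [disjoint S2 & S].
Proof. by apply: disjointWr S2_fresh; apply/subsetP => w wS; rewrite !inE wS !orbT. Qed.
Let S2_S1 : [disjoint S2 & S1].
Proof. by apply: disjointWr S2_fresh; rewrite subsetUr. Qed.

Lemma chain_notin : z \notin chain (x', y', S) S1 S2.
Proof. by rewrite !inE /= (negPf z_S1) (negPf z_x') (negPf z_S) (negPf z_y') (negPf z_S2). Qed.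

Lemma card_chain : #|chain (x', y', S) S1 S2| = (#|S1| + #|S| + #|S2| + 2)%N.
Proof.
rewrite /chain /= cardsU_disjoint; last first.
  rewrite disjointsUr !(disjoint_sym S1) !disjointsUl !disjoints1.
  by rewrite x'_S1 y'_S1 (disjoint_sym S) S1_S S2_S1.
rewrite cardsU_disjoint; last by rewrite disjointsU1 x'y' x'_S2 y'S (disjoint_sym S) S2_S.
by rewrite !cardsU1 x'S y'_S2 /= !add1n addSn !addnS addn0 addnA.
Qed.

Lemma K4m_factor_chain : bridge_link z x' y' S1 S2 ->
  has_K4m_factor E (x' |: S) -> has_K4m_factor E (y' |: S) ->
  has_K4m_factor E (z |: chain (x', y', S) S1 S2).
Proof.
case/orP => /andP [F1 F2] Fx Fy.
  rewrite /chain /= setUA; apply: K4m_factorU => //; last first.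
    by apply: K4m_factorU => //; rewrite disjointsU1 x'y' x'_S2 y'S (disjoint_sym S) S2_S.
  by rewrite disjointsUr !disjointsU1 z_x' z_y' z_S z_S2 x'_S1 y'_S1 S1_S (disjoint_sym S1) S2_S1.
have -> : z |: chain (x', y', S) S1 S2 = (x' |: S1) :|: ((y' |: S) :|: (z |: S2)).
  apply/setP => v; rewrite !inE.
  by move: (v == z) (v == x') (v == y') (v \in S1) (v \in S) (v \in S2); do 6!case.
apply: K4m_factorU => //; last first.
  by apply: K4m_factorU => //; rewrite disjointsU1 eq_sym z_y' y'_S2 z_S (disjoint_sym S) S2_S.
by rewrite disjointsUr !disjointsU1 x'y' eq_sym z_x' x'S x'_S2 y'_S1 z_S1 S1_S
  (disjoint_sym S1) S2_S1.
Qed.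

End ChainFactor.
End K4mFactors.

(* The [.+1] only matters for [c = p = 0], where it keeps the density positive. *)
Definition bridge_density (eps eta : rat) (c p : nat) : rat :=
  eps / 2 * (eta / 2) ^+ 2 / (chain_multiplicity (4 * (2 * c + p) - 1)).+1%:R.

Section Bridges.
Variables (n : nat) (E : {set {set 'I_n}}) (X Y : {set 'I_n}) (c p : nat) (eta eps : rat).
Hypotheses (eta_gt0 : 0 < eta) (eps_gt0 : 0 < eps) (XY_disjoint : [disjoint X & Y]).
Hypotheses (X_closed : closed_set E c eta X) (Y_closed : closed_set E c eta Y).
Hypothesis bridges_many : eps * n%:R ^+ (4 * p + 1) <= (num_bridges E p X Y)%:R.
Hypothesis eps_large : 12%:R <= eps * n%:R.
Hypothesis eta_large : (2 * (4 * c + 4 * p + 2))%:R <= eta * n%:R.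

Local Notation bridges := [set t : 'I_n * 'I_n * {set 'I_n} |
  [&& t.1.1 \in X, t.1.2 \in Y & connector E p t.1.1 t.1.2 t.2]].

Lemma bridge_lengths_gt0 : (0 < c)%N /\ (0 < p)%N.
Proof.
have n_gt0 : 0 < n%:R :> rat.
  by rewrite ltr0n lt0n; apply/eqP => n0; move: eps_large; rewrite n0 mulr0; lra.
have [t] : exists t, t \in bridges.
  apply/set0Pn; rewrite -card_gt0 -(ltr0n rat); apply: lt_le_trans bridges_many.
  by rewrite mulr_gt0 ?exprn_gt0.
rewrite inE => /and3P [tX _ conn]; split; last exact: connector_length_gt0 conn.
have : (0 < #|[set S | connector E c t.1.1 t.1.1 S]|)%N.
  rewrite -(ltr0n rat); apply: lt_le_trans (X_closed tX tX).
  by rewrite mulr_gt0 ?exprn_gt0.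
by rewrite card_gt0 => /set0Pn [S]; rewrite inE => /connector_length_gt0.
Qed.

Section Linking.
Variables (u v : 'I_n) (P1 P2 : 'I_n -> {set 'I_n} -> bool).
Hypothesis P1_size : forall x S, P1 x S -> #|S| = (4 * c - 1)%N.
Hypothesis P2_size : forall y S, P2 y S -> #|S| = (4 * c - 1)%N.
Hypothesis P1_many :
  forall t, t \in bridges -> eta * n%:R ^+ (4 * c - 1) <= #|[set S | P1 t.1.1 S]|%:R.
Hypothesis P2_many :
  forall t, t \in bridges -> eta * n%:R ^+ (4 * c - 1) <= #|[set S | P2 t.1.2 S]|%:R.
Hypothesis linked : forall x' y' S1 S2, x' \in X -> y' \in Y -> P1 x' S1 -> P2 y' S2 ->
  bridge_link E u x' y' S1 S2 && bridge_link E v x' y' S1 S2.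

Lemma chain_sets_sub_connectors :
  chain_sets [set u; v] bridges P1 P2 \subset [set C | connector E (2 * c + p) u v C].
Proof.
have [c_gt0 p_gt0] := bridge_lengths_gt0.
have size_eq : (4 * (2 * c + p) - 1 = (4 * c - 1) + (4 * p - 1) + (4 * c - 1) + 2)%N.
  by lia.
have uF : u \in [set u; v] by rewrite !inE eqxx.
have vF : v \in [set u; v] by rewrite !inE eqxx orbT.
apply/subsetP => _ /imsetP [[[[[x' y'] S] S1] S2] + ->].
rewrite !inE /= => /andP [/andP [/andP [/and3P [x'X y'Y conn] S_fresh]]].
move=> /andP [P1S1 S1_fresh] /andP [P2S2 S2_fresh].
have /and5P [x'S y'S _ Fx' Fy'] := conn.
have x'y' : x' != y' by apply: contraTneq x'X => ->; rewrite (disjointFl XY_disjoint).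
have /andP [link_u link_v] := linked x'X y'Y P1S1 P2S2.
apply/and5P; split.
- exact: (chain_notin uF S_fresh S1_fresh S2_fresh).
- exact: (chain_notin vF S_fresh S1_fresh S2_fresh).
- rewrite (card_chain x'S y'S x'y' S1_fresh S2_fresh) (P1_size P1S1) (P2_size P2S2).
  by rewrite (card_connector conn) size_eq.
- exact: (K4m_factor_chain uF x'S y'S x'y' S_fresh S1_fresh S2_fresh link_u Fx' Fy').
- exact: (K4m_factor_chain vF x'S y'S x'y' S_fresh S1_fresh S2_fresh link_v Fx' Fy').
Qed.

Lemma close_through_bridges : close E (2 * c + p) (bridge_density eps eta c p) u v.
Proof.
have [c_gt0 p_gt0] := bridge_lengths_gt0.
have size_eq : (4 * (2 * c + p) - 1 = 2 * (4 * c - 1) + (4 * p - 1) + 2)%N by lia.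
have ab_le : (2 + (4 * c - 1) + (4 * p - 1) + 2 <= 4 * c + 4 * p + 2)%N by lia.
have a_gt0 : (0 < 4 * c - 1)%N by lia.
have b_gt0 : (0 < 4 * p - 1)%N by lia.
have b2 : (4 * p - 1 + 2 = 4 * p + 1)%N by lia.
have pair_le : (#|[set u; v]| <= 2)%N by rewrite cards2; case: (u != v).
have := @card_chain_sets_ge _ [set u; v] bridges P1 P2 (4 * c - 1) (4 * p - 1) eps eta.
rewrite (card_ord n) => /(_ a_gt0 b_gt0 eps_gt0 eta_gt0) counted.
rewrite /close /bridge_density size_eq mulrAC ler_pdivrMr ?ltr0n //.
apply: le_trans (counted _ _ _ P1_size P2_size P1_many P2_many _) _.
- apply: le_trans eps_large; rewrite ler_nat; exact: (leq_mul (leqnn 6) pair_le).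
- apply: le_trans eta_large; rewrite ler_nat leq_mul2l /=; apply: leq_trans ab_le.
  by rewrite !leq_add2r.
- by move=> t; rewrite inE => /and3P [_ _ /card_connector].
- by rewrite b2.
rewrite [X in _ <= X]mulrC -!natrM ler_nat.
exact: leq_mul (leqnSn _) (subset_leq_card chain_sets_sub_connectors).
Qed.

End Linking.

Lemma close_X_Y u v : u \in X -> v \in Y ->
  close E (2 * c + p) (bridge_density eps eta c p) u v.
Proof.
move=> uX vY; apply: (@close_through_bridges u v
  (fun x' S => connector E c u x' S) (fun y' S => connector E c y' v S)).
- by move=> x S; apply: card_connector.
- by move=> y S; apply: card_connector.
- by move=> t; rewrite inE => /and3P [tX _ _]; apply: X_closed.
- by move=> t; rewrite inE => /and3P [_ tY _]; apply: Y_closed.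
move=> x' y' S1 S2 _ _ /and5P [_ _ _ Fu Fx'] /and5P [_ _ _ Fy' Fv].
by rewrite /bridge_link Fu Fx' Fy' Fv orbT.
Qed.

Lemma close_X_X u v : u \in X -> v \in X ->
  close E (2 * c + p) (bridge_density eps eta c p) u v.
Proof.
move=> uX vX; apply: (@close_through_bridges u v
  (fun _ S => connector E c u v S) (fun y' S => connector E c y' y' S)).
- by move=> x S; apply: card_connector.
- by move=> y S; apply: card_connector.
- by move=> t _; apply: X_closed.
- by move=> t; rewrite inE => /and3P [_ tY _]; apply: Y_closed.
move=> x' y' S1 S2 _ _ /and5P [_ _ _ Fu Fv] /and5P [_ _ _ Fy' _].
by rewrite /bridge_link Fu Fv Fy'.
Qed.

Lemma close_Y_Y u v : u \in Y -> v \in Y ->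
  close E (2 * c + p) (bridge_density eps eta c p) u v.
Proof.
move=> uY vY; apply: (@close_through_bridges u v
  (fun x' S => connector E c x' x' S) (fun _ S => connector E c u v S)).
- by move=> x S; apply: card_connector.
- by move=> y S; apply: card_connector.
- by move=> t; rewrite inE => /and3P [tX _ _]; apply: X_closed.
- by move=> t _; apply: Y_closed.
move=> x' y' S1 S2 _ _ /and5P [_ _ _ Fx' _] /and5P [_ _ _ Fu Fv].
by rewrite /bridge_link Fx' Fu Fv !orbT.
Qed.

Lemma closed_setU_bridges :
  closed_set E (2 * c + p) (bridge_density eps eta c p) (X :|: Y).
Proof.
move=> u v; rewrite !inE => /orP [uX|uY] /orP [vX|vY].
- exact: close_X_X.
- exact: close_X_Y.
- exact/close_sym/close_X_Y.
- exact: close_Y_Y.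
Qed.

End Bridges.

Lemma ler_nat_mul_bound (e : rat) (k n : nat) :
  0 < e -> (Num.bound (k%:R / e) <= n)%N -> k%:R <= e * n%:R.
Proof.
move=> e_gt0 le_n; rewrite mulrC -ler_pdivrMr //; apply/ltW/(lt_le_trans (archi_boundP _)).
  by rewrite divr_ge0 ?ler0n ?ltW.
by rewrite ler_nat.
Qed.

Theorem lemma5p3 :
  forall (eta eps : rat) (c p : nat), 0 < eta -> 0 < eps ->
  exists (eta' : rat) (n0 : nat), 0 < eta' /\
  forall (n : nat) (E : {set {set 'I_n}}) (X Y : {set 'I_n}),
    (n0 <= n)%N ->
    is_3graph E ->
    [disjoint X & Y] ->
    closed_set E c eta X ->
    closed_set E c eta Y ->
    eps * (n%:R ^+ (4 * p + 1)) <= (num_bridges E p X Y)%:R ->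
    closed_set E (2 * c + p) eta' (X :|: Y).
Proof.
move=> eta eps c p eta_gt0 eps_gt0.
set k := (2 * (4 * c + 4 * p + 2))%N.
exists (bridge_density eps eta c p), (Num.bound (12%:R / eps) + Num.bound (k%:R / eta))%N.
split; first by rewrite /bridge_density !(divr_gt0, mulr_gt0, exprn_gt0) ?ltr0n.
move=> n E X Y n_large _ XY_disjoint X_closed Y_closed bridges_many.
apply: closed_setU_bridges => //; apply: ler_nat_mul_bound => //.
  exact: leq_trans (leq_addr _ _) n_large.
exact: leq_trans (leq_addl _ _) n_large.
Qed.
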